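(* Let $\varphi\in L_{loc}(\mathbb{R}^n_+)$ be nonnegative. Then for every $r\ge1$ and every $\alpha\in\mathbb{R}$, $$\int_{\mathbb{R}^n_+}(T\varphi(x))^r\pi(x)^\alpha\,dx\le 2^{\max(1,\alpha)n}\int_{\mathbb{R}^n_+}\varphi(x)^r\pi(x)^\alpha\,dx.$$
   Context: $\mathbb{R}^n_+=(0,\infty)^n$. For $x=(x_1,\dots,x_n)\in\mathbb{R}^n_+$, $\pi(x)=\prod_{k=1}^n x_k$ and $Q(x)=[x_1/2,x_1]\times\cdots\times[x_n/2,x_n]$. For nonnegative $\varphi\in L_{loc}(\mathbb{R}^n_+)$, $T\varphi(x)=\frac{1}{|Q(x)|}\int_{Q(x)}\varphi(u)\,du$. *)

From HB Require Import structures.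
From mathcomp Require Import all_boot all_order all_algebra.
From mathcomp Require Import all_classical all_reals all_analysis.
Unset Strict Implicit. Unset Printing Implicit Defensive.
Import Order.TTheory GRing.Theory Num.Theory.
Import numFieldNormedType.Exports.
Local Open Scope classical_set_scope.
Local Open Scope ring_scope.

Section defs.
Context {R : realType}.

(* n-dimensional Lebesgue measure on R^n = n.-tuple R, built as the iterated
   product measure (same construction as the library's [product_measure1]):
   lambda_0 = Dirac mass at the empty tuple,
   lambda_{n+1}(A) = \int_R lambda_n (section of A at x) dx. *)
Fixpoint leb_n (n : nat) : set (n.-tuple R) -> \bar R :=
  match n as m return set (m.-tuple R) -> \bar R with
  | 0 => fun A => if `[< A [tuple] >] then 1%E else 0%E
  | m.+1 => fun A =>
      (\int[@lebesgue_measure R]_x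
          leb_n m [set t : m.-tuple R | A [tuple of (x : R) :: t]])%E
  end.

Definition Rnpos (n : nat) : set (n.-tuple R) :=
  [set x | forall i : 'I_n, 0 < tnth x i].

Definition pi_prod (n : nat) (x : n.-tuple R) : R := \prod_(i < n) tnth x i.

Definition cbox (n : nat) (a b : n.-tuple R) : set (n.-tuple R) :=
  [set u | forall i : 'I_n, tnth a i <= tnth u i <= tnth b i].

Definition Qbox (n : nat) (x : n.-tuple R) : set (n.-tuple R) :=
  [set u | forall i : 'I_n, tnth x i / 2 <= tnth u i <= tnth x i].

(* phi in L_loc(R^n_+): measurable on R^n_+ and integrable on every compact
   subset of R^n_+; equivalently (every compact subset of (0,oo)^n lies in
   such a cbox) integrable on every closed cbox [a,b] with all a_k > 0. *)
Definition Lloc_pos (n : nat) (phi : n.-tuple R -> R) : Prop :=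
  measurable_fun (Rnpos n) phi /\
  forall a b : n.-tuple R, (forall i : 'I_n, 0 < tnth a i) ->
    (leb_n n).-integrable (cbox n a b) (fun u => (phi u)%:E).

Definition avgT (n : nat) (phi : n.-tuple R -> R) (x : n.-tuple R) : R :=
  fine (\int[leb_n n]_(u in Qbox n x) (phi u)%:E)%E / fine (leb_n n (Qbox n x)).

End defs.

(* Jensen's inequality on the box Q(x), whose volume is pi(x)/2^n, gives
   (T phi(x))^r pi(x)^alpha <= 2^n pi(x)^(alpha-1) \int_{Q(x)} phi^r.
   Integrating in x and exchanging the integrals (Tonelli), each u contributes
   phi(u)^r times the integral of 2^n pi(x)^(alpha-1) over {x | u \in Q(x)},
   the box [u, 2u] of volume pi(u); there every factor 2 x_k^(alpha-1) u_k is
   at most 2^max(1,alpha) u_k^alpha. *)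

From HB Require Import structures.
From mathcomp Require Import all_boot all_order all_algebra.
From mathcomp Require Import all_classical all_reals all_analysis.
From mathcomp Require Import measurable_realfun ring.
Import Order.TTheory GRing.Theory Num.Theory.
Import numFieldNormedType.Exports.
Local Open Scope classical_set_scope.
Local Open Scope ring_scope.

Section sigma_finite_constructions.
Local Open Scope ereal_scope.
Context {R : realType}.

Lemma product_measure_sigma_finite {d1 d2} {T1 : measurableType d1}
    {T2 : measurableType d2} (m1 : {sigma_finite_measure set T1 -> \bar R})
    (m2 : {sigma_finite_measure set T2 -> \bar R}) :
  sigma_finite setT (m1 \x m2).
Proof.
have /sigma_finiteP[F [UF ndF Ffin]] := sigma_finiteT m1.
have /sigma_finiteP[G [UG ndG Gfin]] := sigma_finiteT m2.
exists (fun k => F k `*` G k).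
  apply/seteqP; split => // -[x y] _.
  have [i _ Fx] : (\bigcup_k F k) x by rewrite -UF.
  have [j _ Gy] : (\bigcup_k G k) y by rewrite -UG.
  exists (maxn i j) => //; split.
  - exact: subsetPset (ndF _ _ (leq_maxl i j)) _ Fx.
  - exact: subsetPset (ndG _ _ (leq_maxr i j)) _ Gy.
move=> k; have [mF Foo] := Ffin k; have [mG Goo] := Gfin k.
split; first exact: measurableX.
by rewrite product_measure1E // lte_mul_pinfty // ge0_fin_numE.
Qed.

Lemma pushforward_sigma_finite {d1 d2} {T1 : measurableType d1}
    {T2 : measurableType d2} {mu : set T1 -> \bar R}
    {f : T1 -> T2} {g : T2 -> T1} :
  measurable_fun setT g -> cancel f g ->
  sigma_finite setT mu -> sigma_finite setT (pushforward mu f).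
Proof.
move=> mg fK [F UF Ffin]; exists (fun k => g @^-1` F k).
  apply/seteqP; split => // y _.
  have [k _ Fk] : (\bigcup_k F k) (g y) by rewrite -UF.
  by exists k.
move=> k; have [mF Foo] := Ffin k; split.
  by rewrite -[X in measurable X]setTI; exact: mg.
rewrite /pushforward (_ : f @^-1` _ = F k) //.
by apply/seteqP; split => x /=; rewrite fK.
Qed.

End sigma_finite_constructions.

Section tuple_lebesgue_measure.
Context {R : realType}.
Local Open Scope ereal_scope.

Definition cons_pair m (p : R * m.-tuple R) : m.+1.-tuple R :=
  [tuple of p.1 :: p.2].

Definition uncons_pair m (t : m.+1.-tuple R) : R * m.-tuple R :=
  (thead t, [tuple of behead t]).

Lemma measurable_cons_pair m : measurable_fun setT (@cons_pair m).
Proof. exact: measurable_cons. Qed.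

Lemma measurable_uncons_pair m : measurable_fun setT (@uncons_pair m).
Proof.
by apply/measurable_fun_pairP; split; [exact: measurable_tnth|exact: measurable_behead].
Qed.

Lemma cons_pairK m : cancel (@cons_pair m) (@uncons_pair m).
Proof. by move=> [x t]; congr pair; apply: val_inj. Qed.

Section succ_measure.
Variables (m : nat) (mu : {sigma_finite_measure set (m.-tuple R) -> \bar R}).

Definition succ_lebesgue :=
  pushforward (@lebesgue_measure R \x mu) (@cons_pair m).

(* The library's measure instance on [pushforward] takes the measurability
   of the map as an argument, which unification leaves open. *)
Let succ_lebesgue_measure : {measure set (m.+1.-tuple R) -> \bar R}.
Proof.
by refine (succ_lebesgue : {measure set _ -> \bar R}); exact: measurable_cons_pair.
Defined.

HB.instance Definition _ := Measure.copy succ_lebesgue succ_lebesgue_measure.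

Let succ_lebesgue_sigma_finite : sigma_finite setT succ_lebesgue.
Proof.
apply: (pushforward_sigma_finite (measurable_uncons_pair m) (@cons_pairK m)).
exact: (product_measure_sigma_finite (@lebesgue_measure R) mu).
Qed.

HB.instance Definition _ := Measure_isSigmaFinite.Build _ _ _ succ_lebesgue
  succ_lebesgue_sigma_finite.

End succ_measure.

Fixpoint lebn (n : nat) : {sigma_finite_measure set (n.-tuple R) -> \bar R} :=
  match n with
  | 0 => \d_[tuple]
  | m.+1 => @succ_lebesgue m (lebn m)
  end.

Lemma lebnS m (A : set (m.+1.-tuple R)) :
  lebn m.+1 A =
  \int[@lebesgue_measure R]_x lebn m (xsection (@cons_pair m @^-1` A) x).
Proof. by []. Qed.

Lemma leb_nE n : leb_n n = lebn n.
Proof.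
elim: n => [|m IH]; apply/funext => A /=.
  by rewrite diracE; case: asboolP => h; [rewrite mem_set|rewrite memNset].
rewrite IH; apply: eq_integral => x _ /=; congr (lebn m _).
by apply/seteqP; split => t; rewrite /xsection /= inE.
Qed.

End tuple_lebesgue_measure.

Lemma measurable_forall_ord d (T : measurableType d) n (A : 'I_n -> set T) :
  (forall i, measurable (A i)) -> measurable [set x | forall i, A i x].
Proof.
move=> mA; rewrite (_ : [set x | _] = \bigcap_(i in setT) A i).
  by apply: fin_bigcap_measurable => //; exact: finite_finset.
by apply/seteqP; split => x /= h i //; exact: h.
Qed.

Section boxes.
Context {R : realType}.

Lemma measurable_tuple_box n (I : 'I_n -> set R) :
  (forall i, measurable (I i)) ->
  measurable [set x : n.-tuple R | forall i, I i (tnth x i)].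
Proof.
move=> mI; apply: measurable_forall_ord => i.
by rewrite -[X in measurable X]setTI; exact: measurable_tnth.
Qed.

Lemma measurable_Rnpos n : measurable (@Rnpos R n).
Proof.
have := @measurable_tuple_box n _ (fun=> measurable_itv `]0, +oo[).
by rewrite set_itvoy.
Qed.

Lemma measurable_cbox n (a b : n.-tuple R) : measurable (cbox n a b).
Proof.
exact: (@measurable_tuple_box n _ (fun i => measurable_itv `[tnth a i, tnth b i])).
Qed.

Lemma Qbox_cbox n (x : n.-tuple R) :
  Qbox n x = cbox n [tuple tnth x i / 2 | i < n] x.
Proof. by apply/seteqP; split => u /= h i; have := h i; rewrite tnth_mktuple. Qed.

Lemma measurable_Qbox n (x : n.-tuple R) : measurable (Qbox n x).
Proof. by rewrite Qbox_cbox; exact: measurable_cbox. Qed.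

Lemma pi_prod_gt0 {n} {x : n.-tuple R} : Rnpos n x -> 0 < pi_prod n x.
Proof. by move=> x0; apply: prodr_gt0 => i _; exact: x0. Qed.

Lemma Qbox_sub_Rnpos {n} {x : n.-tuple R} : Rnpos n x -> Qbox n x `<=` Rnpos n.
Proof.
move=> x0 u Qu i; have /andP[xu _] := Qu i.
by apply: lt_le_trans xu; rewrite divr_gt0 // x0.
Qed.

Lemma cbox_cons m a0 b0 x (a b t : m.-tuple R) :
  cbox m.+1 [tuple of a0 :: a] [tuple of b0 :: b] [tuple of x :: t] <->
  a0 <= x <= b0 /\ cbox m a b t.
Proof.
split => [h|[hx h] i].
  split => [|j]; first by have := h ord0; rewrite !tnth0.
  by have := h (lift ord0 j); rewrite !tnthS.
by case: (unliftP ord0 i) => [j ->|->]; rewrite ?tnthS ?tnth0.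
Qed.

Lemma lebn_cbox n (a b : n.-tuple R) : (forall i, tnth a i <= tnth b i) ->
  lebn n (cbox n a b) = (\prod_(i < n) (tnth b i - tnth a i))%:E.
Proof.
elim: n a b => [|m IH] a b ab.
  by rewrite big_ord0 /= diracE mem_set // => -[] [].
case/tupleP: a ab => a0 a; case/tupleP: b => b0 b ab.
have ab0 : a0 <= b0 by have := ab ord0; rewrite !tnth0.
have {}ab i : tnth a i <= tnth b i by have := ab (lift ord0 i); rewrite !tnthS.
rewrite big_ord_recl !tnth0; under eq_bigr do rewrite !tnthS.
rewrite EFinM -IH // lebnS.
transitivity (\int[@lebesgue_measure R]_x
    ((\1_`[a0, b0] x)%:E * lebn m (cbox m a b)))%E.
  apply: eq_integral => x _; rewrite indicE mem_setE in_itv /=.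
  have [xab|xab] := boolP (a0 <= x <= b0).
    rewrite mul1e; congr (lebn m _).
    apply/seteqP; split => t; rewrite /xsection /= inE /preimage /cons_pair /=.
      by case/cbox_cons.
    by move=> abt; apply/cbox_cons.
  rewrite mul0e -[RHS](measure0 (lebn m)); congr (lebn m _).
  apply/seteqP; split => t //; rewrite /xsection /= inE /preimage /cons_pair /=.
  by case/cbox_cons; rewrite (negbTE xab).
rewrite ge0_integralZr //; last exact/measurable_EFinP/measurable_indic.
rewrite integral_indic // setIT; congr (_ * _)%E.
apply: eq_trans (lebesgue_measure_itv `[a0, b0]) _; rewrite /= lte_fin.
have [_|ba] := ltP a0 b0; first by rewrite EFinB.
by rewrite (@le_anti _ _ a0 b0) ?ab0 ?ba ?subrr.
Qed.

Lemma lebn_Qbox {n} {x : n.-tuple R} : Rnpos n x ->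
  lebn n (Qbox n x) = (pi_prod n x / 2 ^+ n)%:E.
Proof.
move=> x0; rewrite Qbox_cbox lebn_cbox => [|i]; last first.
  by rewrite tnth_mktuple ler_pdivrMr // ler_peMr // ?ler1n // ltW // x0.
congr EFin; transitivity (\prod_(i < n) (tnth x i * 2^-1)).
  by apply: eq_bigr => i _; rewrite tnth_mktuple; field.
by rewrite big_split /= prodr_const card_ord exprVn.
Qed.

Lemma measurable_pi_prod n : measurable_fun setT (@pi_prod R n).
Proof. by apply: measurable_prod => i _; exact: measurable_tnth. Qed.

Definition Qgraph n : set (n.-tuple R * n.-tuple R) := [set z | Qbox n z.1 z.2].

Lemma measurable_Qgraph n : measurable (Qgraph n).
Proof.
rewrite (_ : Qgraph n = [set z | forall i,
    ([set z | tnth z.1 i / 2 <= tnth z.2 i] `&` [set z | tnth z.2 i <= tnth z.1 i]) z]).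
  apply: measurable_forall_ord => i.
  have m1 : measurable_fun setT (fun z : n.-tuple R * n.-tuple R => tnth z.1 i).
    exact: measurableT_comp (measurable_tnth i) measurable_fst.
  have m2 : measurable_fun setT (fun z : n.-tuple R * n.-tuple R => tnth z.2 i).
    exact: measurableT_comp (measurable_tnth i) measurable_snd.
  apply: measurableI; rewrite -[X in measurable X]setTI;
    by apply: measurable_fun_le => //; exact: measurable_funM.
by apply/seteqP; split => z /= h i; [have /andP[] := h i|have [-> ->] := h i].
Qed.

End boxes.

Section powR_inequalities.
Context {R : realType}.

Lemma powR_prod (I : Type) (s : seq I) (f : I -> R) p : (forall i, 0 <= f i) ->
  (\prod_(i <- s) f i) `^ p = \prod_(i <- s) f i `^ p.
Proof.
move=> f0; suff [] : 0 <= \prod_(i <- s) f i /\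
    (\prod_(i <- s) f i) `^ p = \prod_(i <- s) f i `^ p by [].
apply: (big_rec2 (fun y z => 0 <= y /\ y `^ p = z)); first by rewrite powR1.
by move=> i y _ _ [y0 <-]; split; [exact: mulr_ge0|exact: powRM].
Qed.

Lemma mulr_powRB1_gt0 (x p : R) : 0 < x -> x * x `^ (p - 1) = x `^ p.
Proof.
move=> x0; rewrite -{1}(powRr1 (ltW x0)) -powRD; first by rewrite addrC subrK.
by apply/implyP => _; rewrite gt_eqF.
Qed.

(* The tangent line of [t `^ r] at [m], with the negative term moved so that
   both sides are nonnegative. *)
Lemma powR_tangent_le (r m t : R) : 1 <= r -> 0 < m -> 0 <= t ->
  r * m `^ (r - 1) * t <= t `^ r + (r - 1) * m `^ r.
Proof.
rewrite le_eqVlt => /predU1P[<- _ t0|r1 m0 t0].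
  by rewrite subrr powRr0 mul0r addr0 mulr1 mul1r powRr1.
have r0 : 0 < r by exact: lt_trans r1.
have r10 : 0 < r - 1 by rewrite subr_gt0.
pose q := r / (r - 1).
have q0 : 0 < q by rewrite divr_gt0.
have pq : r^-1 + q^-1 = 1 by rewrite /q invf_div; field; rewrite gt_eqF.
have := conjugate_powR t0 (powR_ge0 m (r - 1)) r0 q0 pq.
rewrite -powRrM (_ : (r - 1) * q = r); last by rewrite /q; field; rewrite gt_eqF.
have -> : t `^ r + (r - 1) * m `^ r = r * (t `^ r / r + m `^ r / q).
  by rewrite /q; field; rewrite !gt_eqF.
by rewrite -mulrA [_ * t]mulrC ler_pM2l.
Qed.

Lemma powR_doubling_le (alpha u t : R) : 0 < u -> u <= t <= 2 * u ->
  2 * t `^ (alpha - 1) * u <= 2 `^ Num.max 1 alpha * u `^ alpha.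
Proof.
move=> u0 /andP[ut t2u]; have t0 : 0 < t := lt_le_trans u0 ut.
have [a1|a1] := leP 1 alpha.
  have tpow : t `^ (alpha - 1) <= (2 * u) `^ (alpha - 1).
    by apply: ge0_ler_powR; rewrite ?subr_ge0 // nnegrE ltW // mulr_gt0.
  apply: (@le_trans _ _ (2 * (2 * u) `^ (alpha - 1) * u)).
    by rewrite ler_pM2r // ler_pM2l.
  rewrite powRM ?(ltW u0) // -(mulr_powRB1_gt0 _ alpha (ltr0Sn _ 1)).
  by rewrite -(mulr_powRB1_gt0 _ alpha u0) (mulrC u) !mulrA.
have tpow : t `^ (alpha - 1) <= u `^ (alpha - 1).
  rewrite (_ : alpha - 1 = - (1 - alpha)); last by ring.
  rewrite !powRN lef_pV2 ?posrE ?powR_gt0 //.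
  by apply: ge0_ler_powR; rewrite // ?subr_ge0 ?nnegrE ltW.
rewrite powRr1 // -(mulr_powRB1_gt0 _ alpha u0).
by rewrite -mulrA ler_pM2l // mulrC ler_pM2l.
Qed.

End powR_inequalities.

Section integral_inequalities.
Local Open Scope ereal_scope.
Context {d} {T : measurableType d} {R : realType} {mu : {measure set T -> \bar R}}.

(* No measurability is needed: the integral of a nonnegative function is a
   supremum over the simple functions below it. *)
Lemma ge0_le_integral_nonmeas {D : set T} {f g : T -> \bar R} :
  (forall x, D x -> 0 <= f x) -> (forall x, D x -> f x <= g x) ->
  \int[mu]_(x in D) f x <= \int[mu]_(x in D) g x.
Proof.
move=> f0 fg; have g0 x : D x -> 0 <= g x.
  by move=> Dx; exact: le_trans (f0 _ Dx) (fg _ Dx).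
rewrite !(integral_mkcond D) !ge0_integralTE; [|exact: erestrict_ge0..].
apply: ereal_sup_le => _ [h /= hf <-]; exists h => //= x.
exact: le_trans (hf x) (lee_restrict fg x).
Qed.

Lemma powR_average_le {A : set T} {V r : R} {f : T -> R} :
  measurable A -> mu A = V%:E -> (0 < V)%R -> (1 <= r)%R ->
  (forall x, A x -> 0 <= f x)%R -> measurable_fun A f ->
  ((fine (\int[mu]_(x in A) (f x)%:E) / V) `^ r * V)%:E <=
  \int[mu]_(x in A) (f x `^ r)%:E.
Proof.
move=> mA muA V0 r1 f0 mf.
set I := \int[mu]_(x in A) (f x)%:E; set m := (fine I / V)%R.
have r0 : (0 < r)%R := lt_le_trans ltr01 r1.
have I0 : 0 <= I by apply: integral_ge0 => x /f0; rewrite lee_fin.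
(* [fine] sends an infinite integral to 0, so this case covers it. *)
have [->|m_neq0] := eqVneq m 0%R.
  rewrite powR0 ?gt_eqF // mul0r.
  by apply: integral_ge0 => x _; rewrite lee_fin powR_ge0.
have m0 : (0 < m)%R by rewrite lt_def m_neq0 divr_ge0 ?fine_ge0 // ltW.
have Ifin : I \is a fin_num.
  rewrite ge0_fin_numE // ltNge leye_eq; apply: contra m_neq0 => /eqP Ioo.
  by rewrite /m Ioo mul0r.
have mfE : measurable_fun A (fun x => (f x)%:E) by exact/measurable_EFinP.
have mfrE : measurable_fun A (fun x => (f x `^ r)%:E).
  by apply/measurable_EFinP; exact: measurableT_comp (measurable_powR r) mf.
have c0 : (0 <= r * m `^ (r - 1))%R by rewrite mulr_ge0 ?powR_ge0 // ltW.
have c'0 : (0 <= (r - 1) * m `^ r)%R by rewrite mulr_ge0 ?powR_ge0 // subr_ge0.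
have tangent : \int[mu]_(x in A) ((r * m `^ (r - 1))%:E * (f x)%:E) <=
    \int[mu]_(x in A) ((f x `^ r)%:E + ((r - 1) * m `^ r)%:E).
  apply: ge0_le_integral_nonmeas => [x Ax|x Ax].
    by rewrite -EFinM lee_fin mulr_ge0 // f0.
  by rewrite -EFinM -EFinD lee_fin powR_tangent_le // f0.
have fE0 x : A x -> 0 <= (f x)%:E by move/f0; rewrite lee_fin.
have frE0 x : A x -> 0 <= (f x `^ r)%:E by rewrite lee_fin powR_ge0.
have cE0 x : A x -> 0 <= ((r - 1) * m `^ r)%:E by rewrite lee_fin.
move: tangent; rewrite (ge0_integralZl_EFin _ mA fE0 mfE c0).
rewrite (ge0_integralD _ mA frE0 mfrE cE0 (measurable_cst _)).
rewrite integral_cst // muA -/I -(fineK Ifin) -!EFinM -leeBlDr // -EFinB.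
have IE : fine I = (m * V)%R by rewrite /m divfK ?gt_eqF.
move/(le_trans _); apply; rewrite lee_fin IE.
suff -> : (r * m `^ (r - 1) * (m * V) - (r - 1) * m `^ r * V = m `^ r * V)%R by [].
by rewrite -(mulr_powRB1_gt0 _ r m0); ring.
Qed.

End integral_inequalities.

Lemma pi_prod_weight_le {R : realType} n (alpha : R) (u x : n.-tuple R) :
  Rnpos n u -> cbox n u [tuple 2 * tnth u i | i < n] x ->
  2 ^+ n * pi_prod n x `^ (alpha - 1) * pi_prod n u <=
  2 `^ (Num.max 1 alpha * n%:R) * pi_prod n u `^ alpha.
Proof.
move=> u0 ux; have {}ux i : tnth u i <= tnth x i <= 2 * tnth u i.
  by have := ux i; rewrite tnth_mktuple.
have x0 i : 0 <= tnth x i.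
  by have /andP[+ _] := ux i; apply: le_trans; exact: ltW (u0 i).
rewrite /pi_prod !powR_prod // => [|i]; last exact: ltW (u0 i).
have prod_cst (c : R) : c ^+ n = \prod_(i < n) c by rewrite prodr_const card_ord.
rewrite powRrM powR_mulrn ?powR_ge0 // !prod_cst -!big_split /=.
apply: ler_prod => i _.
by rewrite !mulr_ge0 ?powR_ge0 ?(ltW (u0 i)) //= powR_doubling_le.
Qed.

Section averaging_operator.
Context {R : realType} {n : nat} {phi : n.-tuple R -> R} {r alpha : R}.
Hypotheses (phi_ge0 : forall x, Rnpos n x -> 0 <= phi x)
  (mphi : measurable_fun (Rnpos n) phi) (r_ge1 : 1 <= r).

Local Notation D := (Rnpos n).

Let weight (x : n.-tuple R) : R := 2 ^+ n * pi_prod n x `^ (alpha - 1).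

Let phir : n.-tuple R -> R := (fun u => phi u `^ r) \_ D.

Definition Qkernel (z : n.-tuple R * n.-tuple R) : \bar R :=
  (\1_D z.1 * weight z.1 * \1_(Qgraph n) z * phir z.2)%:E.

Lemma Qkernel_ge0 z : (0 <= Qkernel z)%E.
Proof.
rewrite lee_fin !mulr_ge0 ?exprn_ge0 ?powR_ge0 //.
by rewrite /phir patchE; case: ifP => // _; exact: powR_ge0.
Qed.

Lemma measurable_Qkernel : measurable_fun setT Qkernel.
Proof.
have mphir : measurable_fun setT phir.
  apply/(measurable_restrictT _ (measurable_Rnpos n)).
  exact: measurableT_comp (measurable_powR r) mphi.
apply/measurable_EFinP; apply: measurable_funM.
  apply: measurable_funM; last exact: measurable_indic (measurable_Qgraph n).
  apply: measurable_funM.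
    exact: measurableT_comp (measurable_indic (measurable_Rnpos n)) measurable_fst.
  apply: measurableT_comp _ measurable_fst; apply: measurable_funM => //.
  exact: measurableT_comp (measurable_powR _) (measurable_pi_prod n).
exact: measurableT_comp mphir measurable_snd.
Qed.

Lemma integral_Qkernel_fst x : D x ->
  (\int[lebn n]_u Qkernel (x, u) =
   (weight x)%:E * \int[lebn n]_(u in Qbox n x) (phi u `^ r)%:E)%E.
Proof.
move=> Dx; have QD := Qbox_sub_Rnpos Dx.
have mphirQ : measurable_fun (Qbox n x) (fun u => (phi u `^ r)%:E).
  apply/measurable_EFinP; apply: measurableT_comp (measurable_powR r) _.
  exact: measurable_funS (measurable_Rnpos n) QD mphi.
have w0 : 0 <= weight x by rewrite mulr_ge0 ?exprn_ge0 ?powR_ge0.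
have phirQ0 u : Qbox n x u -> (0 <= (phi u `^ r)%:E)%E by rewrite lee_fin powR_ge0.
rewrite -(ge0_integralZl_EFin _ (measurable_Qbox n x) phirQ0 mphirQ w0).
rewrite [RHS]integral_mkcond; apply: eq_integral => u _.
rewrite patchE /Qkernel /= !indicE (mem_set Dx) mul1r.
have [/set_mem Qu|/negP Qu] := boolP (u \in Qbox n x).
  rewrite (mem_set (Qu : Qgraph n (x, u))) /phir patchE (mem_set (QD _ Qu)).
  by rewrite mulr1 EFinM.
by rewrite (memNset (fun Qu' : Qgraph n (x, u) => Qu (mem_set Qu'))) mulr0 mul0r.
Qed.

Lemma avgT_powR_le_Qkernel x : D x ->
  ((avgT n phi x `^ r * pi_prod n x `^ alpha)%:E <=
   \int[lebn n]_u Qkernel (x, u))%E.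
Proof.
move=> Dx; have QD := Qbox_sub_Rnpos Dx.
have V0 : 0 < pi_prod n x / 2 ^+ n by rewrite divr_gt0 ?pi_prod_gt0 ?exprn_gt0.
have jensen := powR_average_le (measurable_Qbox n x) (lebn_Qbox Dx) V0 r_ge1
  (fun u Qu => phi_ge0 u (QD u Qu)) (measurable_funS (measurable_Rnpos n) QD mphi).
rewrite integral_Qkernel_fst // muleC.
have -> : pi_prod n x `^ alpha = pi_prod n x / 2 ^+ n * weight x.
  rewrite /weight mulrA divfK ?expf_neq0 //.
  by rewrite (mulr_powRB1_gt0 _ _ (pi_prod_gt0 Dx)).
rewrite mulrA EFinM lee_wpmul2r ?lee_fin ?mulr_ge0 ?exprn_ge0 ?powR_ge0 //.
by move: jensen; rewrite /avgT !leb_nE lebn_Qbox.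
Qed.

Let K := 2 `^ (Num.max 1 alpha * n%:R).

Lemma integral_Qkernel_snd_le u : D u ->
  (\int[lebn n]_x Qkernel (x, u) <=
   (K * (phi u `^ r * pi_prod n u `^ alpha))%:E)%E.
Proof.
move=> Du; have pu0 := pi_prod_gt0 Du.
set u2 := [tuple 2 * tnth u i | i < n].
set B := K * pi_prod n u `^ alpha / pi_prod n u * phi u `^ r.
have B0 : 0 <= B by rewrite !mulr_ge0 ?powR_ge0 ?invr_ge0 ?ltW.
have Qkernel_le x : (Qkernel (x, u) <= (B * \1_(cbox n u u2) x)%:E)%E.
  rewrite /Qkernel /= lee_fin /phir patchE (mem_set Du) !indicE.
  have [/set_mem Dx|_] := boolP (x \in D); last by rewrite !mul0r mulr_ge0.
  have [/set_mem Qxu|_] := boolP ((x, u) \in Qgraph n); last first.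
    by rewrite !(mulr0, mul0r) mulr_ge0.
  have xbox : cbox n u u2 x.
    move=> i; rewrite tnth_mktuple; have /andP[h1 ->] := Qxu i.
    by rewrite -ler_pdivrMl // mulrC.
  rewrite (mem_set xbox) mul1r !mulr1 ler_wpM2r ?powR_ge0 // ler_pdivlMr //.
  exact: pi_prod_weight_le.
apply: le_trans (ge0_le_integral_nonmeas (fun x _ => Qkernel_ge0 (x, u))
  (fun x _ => Qkernel_le x)) _.
under eq_integral do rewrite EFinM.
have mI : measurable_fun setT (fun x => (\1_(cbox n u u2) x : R)%:E).
  by apply/measurable_EFinP; exact: measurable_indic (measurable_cbox _ _ _).
have I0 x : setT x -> (0 <= (\1_(cbox n u u2) x : R)%:E)%E by rewrite lee_fin.
rewrite (ge0_integralZl_EFin _ measurableT I0 mI B0).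
have u_le_u2 i : tnth u i <= tnth u2 i.
  by rewrite tnth_mktuple ler_peMl ?ler1n // ltW // Du.
have -> : (\int[lebn n]_x (\1_(cbox n u u2) x : R)%:E = (pi_prod n u)%:E)%E.
  rewrite integral_indic //; last exact: measurable_cbox.
  rewrite setIT.
  apply: eq_trans (lebn_cbox _ _ _ u_le_u2) _; congr EFin.
  by apply: eq_bigr => i _; rewrite tnth_mktuple; ring.
rewrite -EFinM lee_fin.
suff -> : B * pi_prod n u = K * (phi u `^ r * pi_prod n u `^ alpha) by [].
by rewrite /B; field; rewrite gt_eqF.
Qed.

Lemma integral_avgT_le_Qkernel :
  (\int[lebn n]_(x in D) (avgT n phi x `^ r * pi_prod n x `^ alpha)%:E <=
   \int[lebn n]_x \int[lebn n]_u Qkernel (x, u))%E.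
Proof.
rewrite integral_mkcond; apply: ge0_le_integral_nonmeas => x _; rewrite patchE.
  by case: ifP => // _; rewrite lee_fin mulr_ge0 ?powR_ge0.
case: ifPn => [/set_mem Dx|_]; first exact: avgT_powR_le_Qkernel.
by apply: integral_ge0 => u _; exact: Qkernel_ge0.
Qed.

Lemma integral_Qkernel_le :
  (\int[lebn n]_u \int[lebn n]_x Qkernel (x, u) <=
   K%:E * \int[lebn n]_(u in D) (phi u `^ r * pi_prod n u `^ alpha)%:E)%E.
Proof.
have mrhs : measurable_fun D (fun u => (phi u `^ r * pi_prod n u `^ alpha)%:E).
  apply/measurable_EFinP; apply: measurable_funM.
    exact: measurableT_comp (measurable_powR r) mphi.
  apply: measurableT_comp (measurable_powR _) _.
  exact: measurable_funS (measurable_pi_prod n).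
have rhs0 u : D u -> (0 <= (phi u `^ r * pi_prod n u `^ alpha)%:E)%E.
  by rewrite lee_fin mulr_ge0 ?powR_ge0.
rewrite -(ge0_integralZl_EFin _ (measurable_Rnpos n) rhs0 mrhs (powR_ge0 _ _)).
rewrite integral_mkcond; apply: ge0_le_integral_nonmeas => u _.
  by apply: integral_ge0 => x _; exact: Qkernel_ge0.
rewrite patchE; case: ifPn => [/set_mem Du|Du].
  by rewrite -EFinM integral_Qkernel_snd_le.
rewrite integral0_eq // => x _.
by rewrite /Qkernel /phir patchE (negbTE Du) mulr0.
Qed.

End averaging_operator.

Theorem lemma5p1 (R : realType) (n : nat) (phi : n.-tuple R -> R) :
  (forall x, Rnpos n x -> 0 <= phi x) ->
  Lloc_pos n phi ->
  forall r alpha : R, 1 <= r ->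
  (\int[leb_n n]_(x in Rnpos n) ((avgT n phi x) `^ r * (pi_prod n x) `^ alpha)%:E
   <= (2 `^ (Num.max 1 alpha * n%:R))%:E *
      \int[leb_n n]_(x in Rnpos n) ((phi x) `^ r * (pi_prod n x) `^ alpha)%:E)%E.
Proof.
move=> phi0 [mphi _] r alpha r1; rewrite !leb_nE.
apply: le_trans (integral_avgT_le_Qkernel phi0 mphi r1) _.
rewrite fubini_tonelli; last 2 first.
- exact: measurable_Qkernel.
- exact: Qkernel_ge0.
exact: integral_Qkernel_le.
Qed.
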